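(* In the setting below, any two correct non-sink members are intertwined: for all correct $i',j'\in\Pi\setminus V_{\mathit{sink}}$, every quorum $Q$ of $i'$ and every quorum $Q'$ of $j'$ satisfy $|Q\cap Q'|>f$.
   Context: Processes and faults: $\Pi$ is a finite set of processes, $f\ge0$ a known integer; $W\subseteq\Pi$ is the set of correct processes and $F=\Pi\setminus W$ the Byzantine faulty processes, $|F|\le f$. Faulty processes may declare arbitrary slices. Slices and quorums: each process $i$ has a set $\mathcal{S}_i$ of slices (subsets of $\Pi$). $Q\subseteq\Pi$ is a quorum if every $i\in Q$ has some $S\in\mathcal{S}_i$ with $S\subseteq Q$; a quorum of $i$ is a quorum containing $i$. Two correct processes $i,j$ are intertwined if $|Q\cap Q'|>f$ for every quorum $Q$ of $i$ and every quorum $Q'$ of $j$. Knowledge graph: each process $i$ is given $\mathit{PD}_i\subseteq\Pi$; $G_{\mathit{di}}$ is the directed graph on $\Pi$ with edge $(i,j)$ iff $j\in\mathit{PD}_i$. A sink component is a strongly connected component of $G_{\mathit{di}}$ from which no path leads outside it. A directed graph is $k$-OSR if (1) its underlying undirected graph is connected; (2) its condensation into strongly connected components has exactly one sink $G_{\mathit{sink}}$; (3) $G_{\mathit{sink}}$ is $k$-strongly connected (every ordered pair of its nodes joined by $k$ node-disjoint directed paths); (4) from every node outside $G_{\mathit{sink}}$ to every node in it there are at least $k$ node-disjoint directed paths. Standing assumption: $G_{\mathit{di}}$ has a unique sink component with vertex set $V_{\mathit{sink}}$, which contains at least $2f+1$ correct processes, and the graph obtained from $G_{\mathit{di}}$ by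 deleting $F$ is $(f+1)$-OSR. Slice construction: let $m=\lceil (|V_{\mathit{sink}}|+f+1)/2\rceil$. Every correct $i\in V_{\mathit{sink}}$ has $\mathcal{S}_i=\{S\subseteq V_{\mathit{sink}}: |S|=m\}$. Every correct $i\notin V_{\mathit{sink}}$ is given a set $V_i\subseteq V_{\mathit{sink}}$ containing at least $f+1$ correct members of $V_{\mathit{sink}}$, and has $\mathcal{S}_i=\{S\subseteq V_i: |S|=f+1\}$. *)

From mathcomp Require Import all_boot.
Set Implicit Arguments. Unset Strict Implicit. Unset Printing Implicit Defensive.

Section Defs.
Variable T : finType.

Definition is_quorum (slices : T -> {set {set T}}) (Q : {set T}) : Prop :=
  forall i, i \in Q -> exists2 S, S \in slices i & S \subset Q.

Definition intertwined (slices : T -> {set {set T}}) (f : nat) (i j : T) : Prop :=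
  forall Q Q' : {set T}, is_quorum slices Q -> i \in Q ->
    is_quorum slices Q' -> j \in Q' -> f < #|Q :&: Q'|.

Definition restr (V : {set T}) (e : rel T) : rel T :=
  [rel x y | [&& x \in V, y \in V & e x y]].

Definition reach (V : {set T}) (e : rel T) (x y : T) : bool :=
  connect (restr V e) x y.

Definition is_scc (V : {set T}) (e : rel T) (C : {set T}) : Prop :=
  [/\ C \subset V, C != set0,
      (forall x y, x \in C -> y \in C -> reach V e x y) &
      (forall x y, x \in C -> y \in V -> reach V e x y -> reach V e y x -> y \in C)].

Definition is_sink_comp (V : {set T}) (e : rel T) (C : {set T}) : Prop :=
  is_scc V e C /\ (forall x y, x \in C -> y \in V -> e x y -> y \in C).

Definition weakly_connected (V : {set T}) (e : rel T) : Prop :=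
  forall x y, x \in V -> y \in V ->
    connect (restr V (fun a b => e a b || e b a)) x y.

(* p (a sequence of vertices after x) is a directed path from x to y in (V, e) *)
Definition is_dpath (V : {set T}) (e : rel T) (x y : T) (p : seq T) : bool :=
  [&& x \in V, path (restr V e) x p & last x p == y].

(* interior vertices of the path x :: p that ends at last x p:
   all vertices of p except the final one *)
Definition interior (p : seq T) : seq T := take (size p).-1 p.

(* there are at least k node-disjoint (i.e. pairwise distinct, internally
   vertex-disjoint) directed paths from x to y in (V, e) *)
Definition k_disjoint_paths (V : {set T}) (e : rel T) (k : nat) (x y : T) : Prop :=
  exists ps : seq (seq T),
    [/\ size ps = k, uniq ps,
        (forall p, p \in ps -> is_dpath V e x y p) &
        (forall i j, i < size ps -> j < size ps -> i != j ->
           forall v, v \in interior (nth [::] ps i) -> v \notin interior (nth [::] ps j))].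

Definition k_strongly_connected (V : {set T}) (e : rel T) (k : nat) : Prop :=
  forall x y, x \in V -> y \in V -> x != y -> k_disjoint_paths V e k x y.

Definition k_OSR (V : {set T}) (e : rel T) (k : nat) : Prop :=
  weakly_connected V e /\
  exists Gs : {set T},
    [/\ is_sink_comp V e Gs,
        (forall C, is_sink_comp V e C -> C = Gs),
        k_strongly_connected Gs e k &
        (forall x y, x \in V -> x \notin Gs -> y \in Gs -> k_disjoint_paths V e k x y)].

End Defs.

Definition Gdi (T : finType) (PD : T -> {set T}) : rel T :=
  [rel i j | j \in PD i].

(* m = ceil((|V_sink| + f + 1) / 2) *)
Definition msize (nsink f : nat) : nat := (nsink + f + 2) %/ 2.

From mathcomp Require Import all_boot.
From mathcomp Require Import zify.

Set Implicit Arguments.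
Unset Strict Implicit.
Unset Printing Implicit Defensive.

(* A quorum containing a correct process outside the sink contains one of its
   slices: f+1 members of V_i, so at least one correct sink member k.  The
   quorum then also contains a slice of k, i.e. m members of V_sink.  Two sets
   of size m inside V_sink share at least 2m - |V_sink| > f members, since
   m = ceil((|V_sink| + f + 1)/2). *)

Lemma leq_card_setI_sub (T : finType) (V A B : {set T}) :
  A \subset V -> B \subset V -> #|A| + #|B| <= #|V| + #|A :&: B|.
Proof.
by move=> AV BV; rewrite -cardsUI leq_add2r subset_leq_card // subUset AV BV.
Qed.

Lemma msize_double_gt (n f : nat) : n + f < (msize n f).*2.
Proof. rewrite /msize; lia. Qed.

Lemma card_setI_gt_msize (T : finType) (f : nat) (V A B : {set T}) :
  A \subset V -> B \subset V ->
  msize #|V| f <= #|A| -> msize #|V| f <= #|B| -> f < #|A :&: B|.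
Proof.
move=> AV BV hA hB.
have := leq_card_setI_sub AV BV; have := msize_double_gt #|V| f; lia.
Qed.

Lemma exists_notin_card_lt (T : finType) (F S : {set T}) :
  #|F| < #|S| -> exists2 k, k \in S & k \notin F.
Proof.
move=> ltFS; have : 0 < #|S :\: F|.
  by rewrite cardsD subn_gt0 (leq_ltn_trans (subset_leq_card (subsetIr S F))).
by case/card_gt0P=> k; rewrite inE => /andP [kF kS]; exists k.
Qed.

Section NonSinkQuorums.

Variables (T : finType) (f : nat) (F Vsink : {set T}).
Variables (slices : T -> {set {set T}}) (Vi : T -> {set T}).

Hypothesis card_F : #|F| <= f.
Hypothesis slices_sink : forall i, i \notin F -> i \in Vsink ->
  slices i = [set S : {set T} | (S \subset Vsink) && (#|S| == msize #|Vsink| f)].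
Hypothesis Vi_sub : forall i, i \notin F -> i \notin Vsink -> Vi i \subset Vsink.
Hypothesis slices_nonsink : forall i, i \notin F -> i \notin Vsink ->
  slices i = [set S : {set T} | (S \subset Vi i) && (#|S| == f + 1)].

Lemma quorum_sink_member_card Q k :
  is_quorum slices Q -> k \in Q -> k \notin F -> k \in Vsink ->
  msize #|Vsink| f <= #|Q :&: Vsink|.
Proof.
move=> hQ kQ kF kV; have [S] := hQ k kQ.
rewrite slices_sink // inE => /andP [SV /eqP <-] SQ.
by rewrite subset_leq_card // subsetI SQ SV.
Qed.

Lemma quorum_nonsink_member_sink Q i :
  is_quorum slices Q -> i \in Q -> i \notin F -> i \notin Vsink ->
  exists k, [/\ k \in Q, k \notin F & k \in Vsink].
Proof.
move=> hQ iQ iF iV; have [S] := hQ i iQ.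
rewrite slices_nonsink // inE => /andP [SVi /eqP cardS] SQ.
have [k kS kF] : exists2 k, k \in S & k \notin F.
  by apply: exists_notin_card_lt; rewrite cardS addn1 ltnS.
exists k; split=> //; first exact: subsetP SQ k kS.
exact: subsetP (Vi_sub iF iV) k (subsetP SVi k kS).
Qed.

Lemma quorum_nonsink_member_card Q i :
  is_quorum slices Q -> i \in Q -> i \notin F -> i \notin Vsink ->
  msize #|Vsink| f <= #|Q :&: Vsink|.
Proof.
move=> hQ iQ iF iV; have [k [kQ kF kV]] := quorum_nonsink_member_sink hQ iQ iF iV.
exact: quorum_sink_member_card hQ kQ kF kV.
Qed.

Lemma nonsink_intertwined i j :
  i \notin F -> j \notin F -> i \notin Vsink -> j \notin Vsink ->
  intertwined slices f i j.
Proof.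
move=> iF jF iV jV Q Q' hQ iQ hQ' jQ'.
have := card_setI_gt_msize (subsetIr Q Vsink) (subsetIr Q' Vsink)
  (quorum_nonsink_member_card hQ iQ iF iV) (quorum_nonsink_member_card hQ' jQ' jF jV).
move/leq_trans; apply; apply: subset_leq_card.
by rewrite setISS // subsetIl.
Qed.

End NonSinkQuorums.

Theorem lemma5 (T : finType) (f : nat) (F : {set T})
  (slices : T -> {set {set T}}) (PD : T -> {set T})
  (Vsink : {set T}) (Vi : T -> {set T})
  (* at most f Byzantine processes; correct processes are those outside F *)
  (hF : #|F| <= f)
  (* G_di has a unique sink component, with vertex set Vsink *)
  (hsink : is_sink_comp [set: T] (Gdi PD) Vsink)
  (hsink_uniq : forall C, is_sink_comp [set: T] (Gdi PD) C -> C = Vsink)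
  (* Vsink contains at least 2f+1 correct processes *)
  (hcorr : 2 * f + 1 <= #|Vsink :\: F|)
  (* G_di minus F is (f+1)-OSR *)
  (hosr : k_OSR (~: F) (Gdi PD) f.+1)
  (* slices of correct sink members *)
  (hslS : forall i, i \notin F -> i \in Vsink ->
     slices i = [set S : {set T} | (S \subset Vsink) && (#|S| == msize #|Vsink| f)])
  (* slices of correct non-sink members *)
  (hVi : forall i, i \notin F -> i \notin Vsink ->
     Vi i \subset Vsink /\ f + 1 <= #|Vi i :\: F|)
  (hslN : forall i, i \notin F -> i \notin Vsink ->
     slices i = [set S : {set T} | (S \subset Vi i) && (#|S| == f + 1)]) :
  forall i' j', i' \notin F -> j' \notin F -> i' \notin Vsink -> j' \notin Vsink ->
    intertwined slices f i' j'.
Proof.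
have Vi_sub i (iF : i \notin F) (iV : i \notin Vsink) := (hVi i iF iV).1.
exact: nonsink_intertwined hF hslS Vi_sub hslN.
Qed.
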